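(* Let $R(s,t)=\mathbb{E}[I_n(f_s)I_n(f_t)]$ have finite 2D $\rho$-variation on $[0,1]^2$ for some $\rho\in[1,3/2)$ with $\|R\|^\rho_{\rho\text{-var};[s,t]\times[s,t]}\le|t-s|$ for all $0\le s\le t\le1$. Then for any $\varphi\in\mathcal{H}^{\hat\otimes n}$, the real function $\phi_t=\langle f_t,\varphi\rangle_{\mathcal{H}^{\otimes n}}$ has finite $\rho$-variation on $[0,1]$ and $$\|\phi\|_{\rho\text{-var};[0,1]}\le C\,\|\varphi\|_{\mathcal{H}^{\otimes n}}\sqrt{\|R\|_{\rho\text{-var};[0,1]^2}},$$ where $C$ is a constant not depending on $\varphi$.
   Context: $\mathcal{H}$ is a real separable Hilbert space with an isonormal Gaussian process $W$ on $(\Omega,\mathcal{F},\mathbb{P})$; $I_n$ is the $n$-th multiple Wiener–Itô integral ($n\ge1$ fixed), so $\mathbb{E}[I_n(f)I_n(g)]=n!\langle f,g\rangle_{\mathcal{H}^{\otimes n}}$; $(f_t)_{t\in[0,1]}\subset\mathcal{H}^{\hat\otimes n}$ (symmetric tensors). For $F:[0,1]^2\to\mathbb{R}$, $F([a,b]\times[c,d]):=F(b,d)-F(a,d)-F(b,c)+F(a,c)$ and $\|F\|_{\rho\text{-var};[s,t]\times[u,v]}:=\big(\sup\sum_{i,j}|F([t_i,t_{i+1}]\times[u_j,u_{j+1}])|^\rho\big)^{1/\rho}$ over partitions of $[s,t]$ and $[u,v]$. The one-dimensional $\rho$-variation is $\|\phi\|_{\rho\text{-var};[0,1]}=(\sup\sum_i|\phi_{t_{i+1}}-\phi_{t_i}|^\rho)^{1/\rho}$.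 *)

From HB Require Import structures.
From mathcomp Require Import all_boot all_order all_algebra.
From mathcomp Require Import all_classical all_reals all_analysis.
Set Implicit Arguments. Unset Strict Implicit. Unset Printing Implicit Defensive.
Import Order.TTheory GRing.Theory Num.Theory.
Local Open Scope ring_scope.
Local Open Scope classical_set_scope.

Definition inner_product (R : realType) (V : lmodType R) (ip : V -> V -> R) : Prop :=
  [/\ (forall x y, ip x y = ip y x),
      (forall (a : R) x y z, ip (a *: x + y) z = a * ip x z + ip y z),
      (forall x, 0 <= ip x x) &
      (forall x, ip x x = 0 -> x = 0)].

Definition ip_norm (R : realType) (V : lmodType R) (ip : V -> V -> R) (x : V) : R :=
  Num.sqrt (ip x x).

(** Partitions of [a,b] follow mathcomp-analysis' [itv_partition a b s]:
    the points are a < s_0 < s_1 < ... < last = b.  The point list is (a :: s). *)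

Definition rho_sum (R : realType) (rho : R) (a b : R) (phi : R -> R) (s : seq R) : R :=
  let F := phi \o nth b (a :: s) in
  \sum_(0 <= k < size s) (`|F k.+1 - F k| `^ rho).

Definition pvar_pow (R : realType) (rho : R) (a b : R) (phi : R -> R) : \bar R :=
  ereal_sup [set (rho_sum rho a b phi s)%:E | s in [set s | itv_partition a b s]].

(** ||phi||_{rho-var;[a,b]} (meaningful when pvar_pow is finite) *)
Definition pvar (R : realType) (rho : R) (a b : R) (phi : R -> R) : R :=
  (fine (pvar_pow rho a b phi)) `^ (rho^-1).

Definition rect_incr (R : realType) (F : R -> R -> R) (a b c d : R) : R :=
  F b d - F a d - F b c + F a c.

Definition rho_sum2 (R : realType) (rho : R) (a b c d : R) (F : R -> R -> R)
    (s u : seq R) : R :=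
  let T := nth b (a :: s) in
  let U := nth d (c :: u) in
  \sum_(0 <= i < size s) \sum_(0 <= j < size u)
     (`|rect_incr F (T i) (T i.+1) (U j) (U j.+1)| `^ rho).

Definition pvar2_pow (R : realType) (rho : R) (a b c d : R) (F : R -> R -> R) : \bar R :=
  ereal_sup [set (rho_sum2 rho a b c d F su.1 su.2)%:E
            | su in [set su : seq R * seq R | itv_partition a b su.1 /\ itv_partition c d su.2]].

Definition pvar2 (R : realType) (rho : R) (a b c d : R) (F : R -> R -> R) : R :=
  (fine (pvar2_pow rho a b c d F)) `^ (rho^-1).

From HB Require Import structures.
From mathcomp Require Import all_boot all_order all_algebra.
From mathcomp Require Import all_classical all_reals all_analysis.
From mathcomp Require Import ring.
Import Order.TTheory GRing.Theory Num.Theory.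
Local Open Scope ring_scope.

(* Fix a partition, let dx_k be the increments of f and put D_k = <dx_k, phi>,
   a_ij = <dx_i, dx_j>.  Testing against the l^p-dual weights
   b_k = sgn(D_k) |D_k|^(p-1) gives sum_k |D_k|^p = <sum_k b_k dx_k, phi>, so by
   Cauchy-Schwarz its square is at most |phi|^2 sum_ij b_i b_j a_ij; Hoelder with
   the conjugate exponent bounds this quadratic form by
   (sum_ij |a_ij|^p)^(1/p) (sum_k |D_k|^p)^(2 - 2/p).  Hence
   (sum_k |D_k|^p)^(2/p) <= |phi|^2 (sum_ij |a_ij|^p)^(1/p), and the a_ij are the
   rectangular increments of R divided by n! >= 1. *)

Section dual_bound.
Context {R : realType}.

Lemma powRVK (x p : R) : 0 <= x -> 0 < p -> (x `^ p^-1) `^ p = x.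
Proof. by move=> x0 p0; rewrite -powRrM mulVf ?gt_eqF ?powRr1. Qed.

Lemma powRKV (x p : R) : 0 <= x -> 0 < p -> (x `^ p) `^ p^-1 = x.
Proof. by move=> x0 p0; rewrite -powRrM mulfV ?gt_eqF ?powRr1. Qed.

Lemma ler_wpowR2r (r x y : R) : 0 <= r -> 0 <= x -> x <= y -> x `^ r <= y `^ r.
Proof.
by move=> r0 x0 xy; apply: ge0_ler_powR; rewrite ?nnegrE // (le_trans x0 xy).
Qed.

Lemma hoelder_seq {I : Type} (r : seq I) (x y : I -> R) (p q : R) :
  0 < p -> 0 < q -> p^-1 + q^-1 = 1 ->
  (forall i, 0 <= x i) -> (forall i, 0 <= y i) ->
  \sum_(i <- r) x i * y i <=
  (\sum_(i <- r) x i `^ p) `^ p^-1 * (\sum_(i <- r) y i `^ q) `^ q^-1.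
Proof.
move=> p0 q0 pq x0 y0; elim: r => [|i r IH].
  by rewrite !big_nil mulr_ge0 ?powR_ge0.
set X := \sum_(j <- r) x j `^ p; set Y := \sum_(j <- r) y j `^ q.
have X0 : 0 <= X by apply: sumr_ge0 => j _; exact: powR_ge0.
have Y0 : 0 <= Y by apply: sumr_ge0 => j _; exact: powR_ge0.
rewrite !big_cons -/X -/Y; apply: le_trans (lerD (lexx _) IH) _.
have := hoelder2 (x0 i) (powR_ge0 X p^-1) (y0 i) (powR_ge0 Y q^-1) p0 q0 pq.
by rewrite !powRVK.
Qed.

Definition dual_weight (p d : R) : R := Num.sg d * `|d| `^ (p - 1).

Lemma dual_weightM (p d : R) : 0 < p -> dual_weight p d * d = `|d| `^ p.
Proof. by move=> p0; rewrite /dual_weight mulrAC -normrEsg mulr_powRB1. Qed.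

Lemma norm_dual_weight_powR (p q d : R) : 0 < p -> 0 < q -> (p - 1) * q = p ->
  `|dual_weight p d| `^ q = `|d| `^ p.
Proof.
move=> p0 q0 pq; have [->|dN] := eqVneq d 0.
  by rewrite /dual_weight sgr0 mul0r normr0 !powR0 ?gt_eqF.
rewrite normrM normr_sg dN mul1r ger0_norm ?powR_ge0 //.
by rewrite -powRrM pq.
Qed.

Lemma norm_dual_weight1_le1 (d : R) : `|dual_weight 1 d| <= 1.
Proof. by rewrite /dual_weight subrr powRr0 mulr1 normr_sg lern1 leq_b1. Qed.

Lemma sum_dual_quad_le {I : Type} (r : seq I) (D : I -> R) (a : I -> I -> R) (p : R) :
  1 <= p ->
  \sum_(i <- r) \sum_(j <- r)
     `|a i j| * (`|dual_weight p (D i)| * `|dual_weight p (D j)|) <=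
  (\sum_(i <- r) \sum_(j <- r) `|a i j| `^ p) `^ p^-1 *
  ((\sum_(i <- r) `|D i| `^ p) `^ (1 - p^-1)) ^+ 2.
Proof.
move=> p1; have p0 : 0 < p by apply: lt_le_trans p1.
have [->|pN1] := eqVneq p 1.
  (* the conjugate exponent is infinite and the weights are bounded by 1 *)
  rewrite invr1 subrr powRr0 expr1n mulr1 powRr1; last first.
    by apply: sumr_ge0 => i _; apply: sumr_ge0 => j _; exact: powR_ge0.
  apply: ler_sum => i _; apply: ler_sum => j _.
  by rewrite powRr1 // ler_piMr // mulr_ile1 // norm_dual_weight1_le1.
have pg1 : 1 < p by rewrite lt_def pN1 p1.
set q := (1 - p^-1)^-1.
have q0 : 0 < q by rewrite invr_gt0 subr_gt0 invf_lt1.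
have qV : q^-1 = 1 - p^-1 by rewrite invrK.
have pq : p^-1 + q^-1 = 1 by rewrite qV addrC subrK.
have p1q : (p - 1) * q = p.
  by rewrite /q; field; rewrite gt_eqF // subr_eq0 gt_eqF.
have S0 : 0 <= \sum_(i <- r) `|D i| `^ p by apply: sumr_ge0 => i _; exact: powR_ge0.
have sum_w : \sum_(i <- r) \sum_(j <- r)
    (`|dual_weight p (D i)| * `|dual_weight p (D j)|) `^ q =
    (\sum_(i <- r) `|D i| `^ p) * (\sum_(i <- r) `|D i| `^ p).
  rewrite mulr_suml; apply: eq_bigr => i _; rewrite mulr_sumr; apply: eq_bigr => j _.
  by rewrite powRM ?normr_ge0 // !(norm_dual_weight_powR _ _ _ p0 q0 p1q).
have := hoelder_seq [seq (i, j) | i <- r, j <- r]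
  (fun k => `|a k.1 k.2|) (fun k => `|dual_weight p (D k.1)| * `|dual_weight p (D k.2)|)
  p q p0 q0 pq (fun=> normr_ge0 _) (fun=> mulr_ge0 (normr_ge0 _) (normr_ge0 _)).
by rewrite !big_allpairs /= sum_w powRM // qV -expr2.
Qed.

Lemma sum_powR_dual_bound {I : Type} (r : seq I) (D : I -> R) (a : I -> I -> R)
    (p N : R) :
  1 <= p -> 0 <= N ->
  (forall b : I -> R, (\sum_(i <- r) b i * D i) ^+ 2 <=
     N * \sum_(i <- r) \sum_(j <- r) b i * b j * a i j) ->
  ((\sum_(i <- r) `|D i| `^ p) `^ p^-1) ^+ 2 <=
  N * (\sum_(i <- r) \sum_(j <- r) `|a i j| `^ p) `^ p^-1.
Proof.
move=> p1 N0 Hb; have p0 : 0 < p by apply: lt_le_trans p1.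
set S := \sum_(i <- r) `|D i| `^ p; set A := \sum_(i <- r) \sum_(j <- r) _.
have S0 : 0 <= S by apply: sumr_ge0 => i _; exact: powR_ge0.
have := Hb (fun i => dual_weight p (D i)).
rewrite (eq_bigr _ (fun i _ => dual_weightM _ (D i) p0)) -/S => HS.
have quad_le : \sum_(i <- r) \sum_(j <- r)
    dual_weight p (D i) * dual_weight p (D j) * a i j <=
    A `^ p^-1 * (S `^ (1 - p^-1)) ^+ 2.
  apply: (le_trans _ (sum_dual_quad_le r D a p p1)); apply: ler_sum => i _.
  apply: ler_sum => j _; rewrite -!normrM mulrC; exact: ler_norm.
have {}HS := le_trans HS (ler_wpM2l N0 quad_le).
have splitS : S `^ p^-1 * S `^ (1 - p^-1) = S.
  by rewrite -powRD addrC subrK ?powRr1 ?oner_eq0.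
have [w0|wN] := eqVneq (S `^ (1 - p^-1)) 0.
  have -> : S = 0 by rewrite -splitS w0 mulr0.
  by rewrite powR0 ?invr_eq0 ?gt_eqF // expr0n mulr_ge0 ?powR_ge0.
have w2 : 0 < (S `^ (1 - p^-1)) ^+ 2 by rewrite exprn_gt0 // lt_def wN powR_ge0.
by rewrite -(ler_pM2r w2) -exprMn splitS -mulrA.
Qed.

End dual_bound.

Section inner_product.
Context {R : realType} {V : lmodType R} {ip : V -> V -> R}.
Hypothesis ipP : inner_product ip.

Lemma ipC x y : ip x y = ip y x.
Proof. by case: ipP. Qed.

Lemma ip_linear a x y z : ip (a *: x + y) z = a * ip x z + ip y z.
Proof. by case: ipP. Qed.

Lemma ip_ge0 x : 0 <= ip x x.
Proof. by case: ipP. Qed.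

Lemma ip_eq0 x : ip x x = 0 -> x = 0.
Proof. by case: ipP => _ _ _; apply. Qed.

Lemma ip0l z : ip 0 z = 0.
Proof. by have := ip_linear (-1) z z z; rewrite scaleN1r addNr mulN1r addNr. Qed.

Lemma ipDl x y z : ip (x + y) z = ip x z + ip y z.
Proof. by have := ip_linear 1 x y z; rewrite scale1r mul1r. Qed.

Lemma ipZl a x z : ip (a *: x) z = a * ip x z.
Proof. by rewrite -[a *: x]addr0 ip_linear ip0l addr0. Qed.

Lemma ipBl x y z : ip (x - y) z = ip x z - ip y z.
Proof. by rewrite ipDl -scaleN1r ipZl mulN1r. Qed.

Lemma ipZr a x z : ip z (a *: x) = a * ip z x.
Proof. by rewrite ipC ipZl ipC. Qed.

Lemma ipBr x y z : ip z (x - y) = ip z x - ip z y.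
Proof. by rewrite ipC ipBl !(ipC z). Qed.

Lemma ip_sumZl {I : Type} (r : seq I) (b : I -> R) (x : I -> V) z :
  ip (\sum_(i <- r) b i *: x i) z = \sum_(i <- r) b i * ip (x i) z.
Proof.
elim: r => [|i r IH]; first by rewrite !big_nil ip0l.
by rewrite !big_cons ip_linear IH.
Qed.

Lemma ip_Cauchy_Schwarz x y : ip x y ^+ 2 <= ip x x * ip y y.
Proof.
have [xx0|xxN] := eqVneq (ip x x) 0.
  by rewrite (ip_eq0 _ xx0) !ip0l expr0n mul0r.
have xx_gt0 : 0 < ip x x by rewrite lt_def xxN ip_ge0.
have := ip_ge0 (ip x y *: x - ip x x *: y).
rewrite !(ipBl, ipBr, ipZl, ipZr) (ipC y x).
have -> : ip x y * (ip x y * ip x x) - ip x y * (ip x x * ip x y) -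
    (ip x x * (ip x y * ip x y) - ip x x * (ip x x * ip y y)) =
    ip x x * (ip x x * ip y y - ip x y ^+ 2) by ring.
by rewrite pmulr_rge0 // subr_ge0.
Qed.

Lemma ip_sum_sqr_le {I : Type} (r : seq I) (x : I -> V) (b : I -> R) z :
  (\sum_(i <- r) b i * ip (x i) z) ^+ 2 <=
  ip z z * \sum_(i <- r) \sum_(j <- r) b i * b j * ip (x i) (x j).
Proof.
set X := \sum_(i <- r) b i *: x i.
have XX : ip X X = \sum_(i <- r) \sum_(j <- r) b i * b j * ip (x i) (x j).
  rewrite ip_sumZl; apply: eq_bigr => i _.
  by rewrite ipC ip_sumZl mulr_sumr; apply: eq_bigr => j _; rewrite ipC mulrA.
by rewrite -ip_sumZl -XX mulrC ip_Cauchy_Schwarz.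
Qed.

Lemma sum_ip_powR_le {I : Type} (r : seq I) (x : I -> V) z (p : R) : 1 <= p ->
  ((\sum_(i <- r) `|ip (x i) z| `^ p) `^ p^-1) ^+ 2 <=
  ip z z * (\sum_(i <- r) \sum_(j <- r) `|ip (x i) (x j)| `^ p) `^ p^-1.
Proof.
by move=> p1; apply: sum_powR_dual_bound => // [|b]; [exact: ip_ge0 | exact: ip_sum_sqr_le].
Qed.

Lemma rho_sum_ip_le (f : R -> V) z (rho a b : R) (s : seq R) : 1 <= rho ->
  (rho_sum rho a b (fun t => ip (f t) z) s `^ rho^-1) ^+ 2 <=
  ip z z * rho_sum2 rho a b a b (fun s t => ip (f s) (f t)) s s `^ rho^-1.
Proof.
move=> rho1; set T := nth b (a :: s); pose dx k := f (T k.+1) - f (T k).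
have -> : rho_sum rho a b (fun t => ip (f t) z) s =
    \sum_(0 <= k < size s) `|ip (dx k) z| `^ rho.
  by apply: eq_bigr => k _; rewrite ipBl.
have -> : rho_sum2 rho a b a b (fun s t => ip (f s) (f t)) s s =
    \sum_(0 <= i < size s) \sum_(0 <= j < size s) `|ip (dx i) (dx j)| `^ rho.
  apply: eq_bigr => i _; apply: eq_bigr => j _.
  by rewrite /rect_incr ipBl !ipBr; congr (`|_| `^ _); ring.
exact: sum_ip_powR_le.
Qed.

End inner_product.

Section variation.
Context {R : realType}.

Lemma rho_sum_ge0 (rho a b : R) (phi : R -> R) (s : seq R) : 0 <= rho_sum rho a b phi s.
Proof. by apply: sumr_ge0 => k _; exact: powR_ge0. Qed.

Lemma rho_sum2_ge0 (rho a b c d : R) (F : R -> R -> R) (s u : seq R) :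
  0 <= rho_sum2 rho a b c d F s u.
Proof. by apply: sumr_ge0 => i _; apply: sumr_ge0 => j _; exact: powR_ge0. Qed.

Lemma rho_sum2_scale (rho a b c d k : R) (F : R -> R -> R) (s u : seq R) :
  rho_sum2 rho a b c d (fun x y => k * F x y) s u =
  `|k| `^ rho * rho_sum2 rho a b c d F s u.
Proof.
rewrite /rho_sum2 mulr_sumr; apply: eq_bigr => i _.
rewrite mulr_sumr; apply: eq_bigr => j _.
by rewrite -powRM ?normr_ge0 // -normrM /rect_incr; congr (`|_| `^ _); ring.
Qed.

Lemma rho_sum2_le_fine {rho a b c d : R} {F : R -> R -> R} {s u : seq R} :
  itv_partition a b s -> itv_partition c d u ->
  (pvar2_pow rho a b c d F < +oo)%E ->
  rho_sum2 rho a b c d F s u <= fine (pvar2_pow rho a b c d F).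
Proof.
move=> hs hu; have : ((rho_sum2 rho a b c d F s u)%:E <= pvar2_pow rho a b c d F)%E.
  by apply: ereal_sup_ubound; exists (s, u).
by case: (pvar2_pow _ _ _ _ _ _) => [r||] //=; rewrite lee_fin.
Qed.

Lemma pvar_pow_le {rho a b M : R} {phi : R -> R} : 0 < rho ->
  (forall s, itv_partition a b s -> rho_sum rho a b phi s `^ rho^-1 <= M) ->
  (pvar_pow rho a b phi <= (M `^ rho)%:E)%E.
Proof.
move=> rho0 HM; apply: ge_ereal_sup => _ [s hs <-]; rewrite lee_fin.
rewrite -(powRVK _ _ (rho_sum_ge0 rho a b phi s) rho0).
by apply: ler_wpowR2r; [exact: ltW | exact: powR_ge0 | exact: HM].
Qed.

(* [a < b] makes the supremum a nonnegative real; [powR] sends negative numbers to 1. *)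
Lemma pvar_le {rho a b M : R} {phi : R -> R} : a < b -> 0 < rho ->
  (forall s, itv_partition a b s -> rho_sum rho a b phi s `^ rho^-1 <= M) ->
  pvar rho a b phi <= M.
Proof.
move=> ab rho0 HM; have part1 := itv_partition1 ab.
have M0 : 0 <= M := le_trans (powR_ge0 _ _) (HM _ part1).
have : ((rho_sum rho a b phi [:: b])%:E <= pvar_pow rho a b phi)%E.
  by apply: ereal_sup_ubound; exists [:: b].
move: (pvar_pow_le rho0 HM); rewrite /pvar.
case: (pvar_pow _ _ _ _) => [r||] //=; rewrite !lee_fin => rM r0.
rewrite -(powRKV _ _ M0 rho0) ler_wpowR2r ?invr_ge0 ?(ltW rho0) //.
exact: le_trans (rho_sum_ge0 _ _ _ _ _) r0.
Qed.

End variation.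

Theorem mainTheorem2 (R : realType) (V : lmodType R) (ip : V -> V -> R)
  (n : nat) (f : R -> V) (rho : R) :
  inner_product ip ->
  (0 < n)%N ->
  1 <= rho -> rho < 3 / 2 ->
  let Rcov := fun s t => (n`!)%:R * ip (f s) (f t) in
  (pvar2_pow rho 0 1 0 1 Rcov < +oo)%E ->
  (forall s t, 0 <= s -> s <= t -> t <= 1 ->
     (pvar2_pow rho s t s t Rcov <= (`|t - s|)%:E)%E) ->
  exists C : R, forall phi0 : V,
    let phi := fun t => ip (f t) phi0 in
    (pvar_pow rho 0 1 phi < +oo)%E /\
    pvar rho 0 1 phi <= C * ip_norm ip phi0 * Num.sqrt (pvar2 rho 0 1 0 1 Rcov).
Proof.
move=> ipP _ rho1 _ Rcov Rcov_fin _; exists 1 => z phi.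
have rho0 : 0 < rho by apply: lt_le_trans rho1.
set M := ip_norm ip z * Num.sqrt (pvar2 rho 0 1 0 1 Rcov).
have M0 : 0 <= M by rewrite mulr_ge0 ?sqrtr_ge0.
have rho_sum_le s : itv_partition 0 1 s -> rho_sum rho 0 1 phi s `^ rho^-1 <= M.
  move=> hs; rewrite -(ler_sqr _ M0) ?nnegrE ?powR_ge0 //.
  rewrite exprMn !sqr_sqrtr ?ip_ge0 ?powR_ge0 //.
  apply: le_trans (rho_sum_ip_le ipP f z rho 0 1 s rho1) _.
  apply: ler_wpM2l; first exact: ip_ge0 ipP z.
  apply: ler_wpowR2r; rewrite ?invr_ge0 ?(ltW rho0) ?rho_sum2_ge0 //.
  apply: le_trans (rho_sum2_le_fine hs hs Rcov_fin).
  rewrite /Rcov rho_sum2_scale ler_peMl ?rho_sum2_ge0 // ger0_norm //.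
  by apply: le_trans (le1r_powR _ rho1); rewrite ler1n fact_gt0.
split; first exact: le_lt_trans (pvar_pow_le rho0 rho_sum_le) (ltry _).
by rewrite mul1r; apply: pvar_le.
Qed.
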